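(* Let $n\ge 2$ be odd. Then there exists no matching mechanism that is resolute, symmetric (i.e. $G^*$-symmetric) and minimally optimal.
   Context: Fix $n\ge 2$, $W=\{1,\dots,n\}$ (women), $M=\{n+1,\dots,2n\}$ (men), $I=W\cup M$. Permutations compose right-to-left. A preference profile is a function $p$ on $I$ assigning to each $x\in W$ a linear order $p(x)$ on $M$ and to each $y\in M$ a linear order $p(y)$ on $W$; $\mathcal{P}$ is the set of preference profiles. For a linear order $R$ on a set $X$ and $a\in X$, $\mathrm{Rank}_R(a)=|\{b\in X: b\succeq_R a\}|$. A matching is a permutation $\mu$ of $I$ with $\mu(W)=M$, $\mu(M)=W$ and $\mu(\mu(z))=z$ for all $z\in I$; $\mathcal{M}$ is the set of matchings. $\mu$ is minimally optimal for $p$ if there is $z\in I$ with $\mathrm{Rank}_{p(z)}(\mu(z))<n$. Let $G^*=\{\varphi\in\mathrm{Sym}(I):\{\varphi(W),\varphi(M)\}=\{W,M\}\}$. For a linear order $R$ on $X\subseteq I$ and $\varphi\in\mathrm{Sym}(I)$, $\varphi R$ is the relation on $\varphi(X)$ with $(a,b)\in\varphi R$ iff $(\varphi^{-1}(a),\varphi^{-1}(b))\in R$. For $p\in\mathcal{P}$, $\varphi\in G^*$, $p^\varphi(z)=\varphi\,p(\varphi^{-1}(z))$. For a permutation $\mu$, $\mu^\varphi=\varphi\mu\varphi^{-1}$; $S^\varphi=\{\mu^\varphi:\mu\in S\}$. A matching mechanism is a correspondence $F$ from $\mathcal{P}$ to $\mathcal{M}$; it is resolute if $|F(p)|=1$ for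 all $p$; minimally optimal if every $\mu\in F(p)$ is minimally optimal for $p$, for all $p$; symmetric if $F(p^\varphi)=F(p)^\varphi$ for all $p\in\mathcal{P}$, $\varphi\in G^*$. *)

(* Agents are 'I_(n + n): women = {i | i < n}, men = {i | n <= i}
   (a relabelling of {1..n} and {n+1..2n} by the shift i |-> i+1). *)
From mathcomp Require Import all_boot all_fingroup.
Set Implicit Arguments. Unset Strict Implicit. Unset Printing Implicit Defensive.

Section Defs.
Variable n : nat.

Definition agent := 'I_(n + n).
Definition Women : {set agent} := [set i : agent | i < n].
Definition Men : {set agent} := [set i : agent | n <= i].

(* A relation on a set X is a set of pairs; (a, b) \in R reads "a is weakly
   preferred to b" (a >=_R b). *)
Definition linear_order (X : {set agent}) (R : {set agent * agent}) : Prop :=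
  [/\ R \subset setX X X,
      forall a, a \in X -> (a, a) \in R,
      forall a b, (a, b) \in R -> (b, a) \in R -> a = b,
      forall a b c, (a, b) \in R -> (b, c) \in R -> (a, c) \in R
    & forall a b, a \in X -> b \in X -> (a, b) \in R \/ (b, a) \in R].

Definition profile := {ffun agent -> {set agent * agent}}.

Definition is_profile (p : profile) : Prop :=
  (forall x, x \in Women -> linear_order Men (p x)) /\
  (forall y, y \in Men -> linear_order Women (p y)).

Definition Rank (R : {set agent * agent}) (a : agent) : nat :=
  #|[set b : agent | (b, a) \in R]|.

Definition matching (mu : {perm agent}) : Prop :=
  [/\ mu @: Women = Men, mu @: Men = Women & forall z, mu (mu z) = z].

Definition minimally_optimal_for (p : profile) (mu : {perm agent}) : Prop :=
  exists z : agent, Rank (p z) (mu z) < n.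

Definition Gstar (phi : {perm agent}) : Prop :=
  [set phi @: Women; phi @: Men] = [set Women; Men].

Definition act_rel (phi : {perm agent}) (R : {set agent * agent}) :
  {set agent * agent} :=
  [set u : agent * agent | ((phi^-1)%g u.1, (phi^-1)%g u.2) \in R].

Definition act_profile (phi : {perm agent}) (p : profile) : profile :=
  [ffun z => act_rel phi (p ((phi^-1)%g z))].

(* mu^phi = phi o mu o phi^-1 (right-to-left composition); in MathComp's
   perm group (s * t) x = t (s x), so this is the conjugate (mu ^ phi)%g. *)
Definition act_match (phi : {perm agent}) (mu : {perm agent}) : {perm agent} :=
  (mu ^ phi)%g.

Definition act_matchset (phi : {perm agent}) (S : {set {perm agent}}) :
  {set {perm agent}} := [set act_match phi mu | mu in S].

Definition mechanism := profile -> {set {perm agent}}.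

Definition is_mechanism (F : mechanism) : Prop :=
  forall p, is_profile p -> forall mu, mu \in F p -> matching mu.

Definition Resolute (F : mechanism) : Prop :=
  forall p, is_profile p -> #|F p| = 1.

Definition MinOptimal (F : mechanism) : Prop :=
  forall p, is_profile p -> forall mu, mu \in F p -> minimally_optimal_for p mu.

Definition Gsymmetric (F : mechanism) : Prop :=
  forall p phi, is_profile p -> Gstar phi ->
    F (act_profile phi p) = act_matchset phi (F p).

End Defs.

From mathcomp Require Import all_boot all_fingroup.
From mathcomp Require Import zify.
Set Implicit Arguments. Unset Strict Implicit. Unset Printing Implicit Defensive.

(* Seat the 2n agents around a round table, alternating women and men, and
   let rot move everybody one seat further; rot exchanges W and M, so it lies
   in G*. In the profile where every agent ranks the opposite sex by clockwise
   distance, cyclically shifted so that the agent sitting opposite (distance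
   n) comes last, every preference is rot-invariant. For a resolute symmetric
   mechanism the chosen matching must then commute with rot, hence be a
   rotation itself; being an involution exchanging the sexes, it is rotation
   by exactly n seats. So everybody is matched with their last choice, and the
   matching is not minimally optimal. *)

Lemma modn_succ_sub (N x y : nat) :
  x < N -> y.+1 %% N + (N - x.+1 %% N) = y + (N - x) %[mod N].
Proof.
move=> x_lt; rewrite modnDml; case: (ltnP x.+1 N) => [xS_lt | N_le].
- by rewrite (modn_small xS_lt) (_ : _ + _ = y + (N - x)) //; lia.
- have -> : x.+1 = N by lia.
  by rewrite modnn subn0 modnDr (_ : N - x = 1) ?addn1 //; lia.
Qed.

Lemma modn_succ_inj (N x y : nat) :
  x < N -> y < N -> x.+1 %% N = y.+1 %% N -> x = y.
Proof.
move=> x_lt y_lt; rewrite -[x.+1]addn1 -[y.+1]addn1 => /eqP; rewrite eqn_modDr.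
by rewrite !modn_small // => /eqP.
Qed.

Section RoundTable.

Variable n : nat.

Local Notation N := (n + n).

Lemma in_Women (a : agent n) : (a \in Women n) = (a \notin Men n).
Proof. by rewrite !inE -ltnNge. Qed.

Definition seat (i : nat) : nat := if i < n then i.*2 else (i - n).*2.+1.

Definition occupant (k : nat) : nat := if odd k then n + k./2 else k./2.

Lemma seat_lt (a : agent n) : seat a < N.
Proof. by case: a => a a_lt; rewrite /seat /=; case: ifP; lia. Qed.

Lemma seat_inj (a b : agent n) : seat a = seat b -> a = b.
Proof.
case: a b => [a a_lt] [b b_lt] e; apply: val_inj => /=.
move: e; rewrite /seat /=; case: ifP; case: ifP; lia.
Qed.

Lemma odd_seat (a : agent n) : odd (seat a) = (a \in Men n).
Proof. by rewrite inE /seat; case: ifP => /= ?; rewrite odd_double; lia. Qed.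

Lemma occupant_lt (k : nat) : k < N -> occupant k < N.
Proof. by rewrite /occupant; case: ifP; lia. Qed.

Lemma occupantK (k : nat) : k < N -> seat (occupant k) = k.
Proof.
move=> k_lt; have := odd_double_half k.
by rewrite /occupant /seat; case: (odd k) => /=; case: ifP; lia.
Qed.

Definition opp (z a : agent n) : bool := (a \in Men n) != (z \in Men n).

(* The clockwise distance from z to a, shifted by n - 1 so that the agent
   sitting opposite z (distance n) gets the largest key 2n - 1. *)
Definition key (z a : agent n) : nat := (seat a + (N - seat z) + n.-1) %% N.

Definition rot_profile : profile n :=
  [ffun z => [set u | [&& opp z u.1, opp z u.2 & key z u.1 <= key z u.2]]].

Lemma key_inj (z : agent n) : injective (key z).
Proof.
move=> a b /eqP; rewrite /key !eqn_modDr !modn_small ?seat_lt //.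
by move/eqP; apply: seat_inj.
Qed.

Lemma linear_order_rot_profile (z : agent n) :
  linear_order [set a | opp z a] (rot_profile z).
Proof.
rewrite ffunE; split.
- by apply/subsetP => -[a b]; rewrite in_setX !inE /= => /and3P[-> -> _].
- by move=> a; rewrite !inE /= => ->; rewrite leqnn.
- move=> a b; rewrite !inE /= => /and3P[_ _ ab] /and3P[_ _ ba].
  by apply: (@key_inj z); apply/eqP; rewrite eqn_leq ab ba.
- move=> a b c; rewrite !inE /= => /and3P[-> _ ab] /and3P[_ -> bc].
  exact: leq_trans ab bc.
- move=> a b; rewrite !inE /= => -> ->.
  by case/orP: (leq_total (key z a) (key z b)); [left | right].
Qed.

Lemma opp_Women (z : agent n) : z \in Women n -> [set a | opp z a] = Men n.
Proof. by move=> z_W; apply/setP => a; move: z_W; rewrite /opp !inE; lia. Qed.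

Lemma opp_Men (z : agent n) : z \in Men n -> [set a | opp z a] = Women n.
Proof. by move=> z_M; apply/setP => a; move: z_M; rewrite /opp !inE; lia. Qed.

Lemma is_profile_rot_profile : is_profile rot_profile.
Proof.
split=> z z_in; [rewrite -(opp_Women z_in) | rewrite -(opp_Men z_in)].
all: exact: linear_order_rot_profile.
Qed.

Hypothesis n_gt0 : 0 < n.

Definition rot_fun (a : agent n) : agent n :=
  Ordinal (occupant_lt (ltn_pmod (seat a).+1 (ltn_addr n n_gt0))).

Lemma seat_rot_fun (a : agent n) : seat (rot_fun a) = (seat a).+1 %% N.
Proof. exact/occupantK/ltn_pmod/ltn_addr. Qed.

Lemma rot_fun_inj : injective rot_fun.
Proof.
move=> a b ab; apply/seat_inj/(modn_succ_inj (seat_lt a) (seat_lt b)).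
by rewrite -!seat_rot_fun ab.
Qed.

Definition rot : {perm agent n} := perm rot_fun_inj.

Lemma seat_rot (a : agent n) : seat (rot a) = (seat a).+1 %% N.
Proof. by rewrite permE seat_rot_fun. Qed.

Lemma seat_iter_rot (k : nat) (a : agent n) :
  seat (iter k rot a) = (seat a + k) %% N.
Proof.
elim: k => [|k IHk]; first by rewrite addn0 modn_small ?seat_lt.
by rewrite iterS seat_rot IHk -addn1 modnDml addn1 addnS.
Qed.

Definition agent0 : agent n := Ordinal (ltn_addr n n_gt0).

Lemma iter_rot_agent0 (a : agent n) : iter (seat a) rot agent0 = a.
Proof.
by apply: seat_inj; rewrite seat_iter_rot /seat /= n_gt0 modn_small ?seat_lt.
Qed.

Lemma in_Men_rot (a : agent n) : (rot a \in Men n) = (a \notin Men n).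
Proof.
have N_even : odd N = false by rewrite oddD addbb.
by rewrite -!odd_seat seat_rot odd_mod.
Qed.

Lemma rot_Women : rot @: Women n = Men n.
Proof.
apply/setP => b; rewrite -[b](permKV rot) mem_imset; last exact: perm_inj.
by rewrite in_Men_rot in_Women.
Qed.

Lemma rot_Men : rot @: Men n = Women n.
Proof.
apply/setP => b; rewrite -[b](permKV rot) mem_imset; last exact: perm_inj.
by rewrite in_Women in_Men_rot negbK.
Qed.

Lemma rot_Gstar : Gstar rot.
Proof. by rewrite /Gstar rot_Women rot_Men setUC. Qed.

Lemma card_Women : #|Women n| = n.
Proof.
have WM : #|Women n| = #|Men n|.
  by rewrite -rot_Women card_imset //; apply: perm_inj.
have CM : ~: Men n = Women n by apply/setP => a; rewrite inE in_Women.
by have := cardsC (Men n); rewrite card_ord CM WM; lia.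
Qed.

Lemma card_Men : #|Men n| = n.
Proof. by rewrite -rot_Women card_imset ?card_Women //; apply: perm_inj. Qed.

Lemma seat_commute_rot (f : agent n -> agent n) :
  (forall a, f (rot a) = rot (f a)) ->
  forall a, seat (f a) = (seat (f agent0) + seat a) %% N.
Proof.
move=> f_rot a.
have f_iter k : f (iter k rot agent0) = iter k rot (f agent0).
  by elim: k => //= k <-; rewrite f_rot.
by rewrite -{1}(iter_rot_agent0 a) f_iter seat_iter_rot.
Qed.

Lemma matching_Men (mu : {perm agent n}) (a : agent n) :
  matching mu -> (mu a \in Men n) = (a \notin Men n).
Proof.
case=> muW muM _; case: (boolP (a \in Men n)) => a_M.
- by apply/negbTE; rewrite -in_Women -muM; apply: imset_f.
- by rewrite -muW; apply: imset_f; rewrite in_Women.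
Qed.

Lemma matching_commute_rot_seat (mu : {perm agent n}) :
  matching mu -> (forall a, mu (rot a) = rot (mu a)) ->
  forall a, seat (mu a) = (seat a + n) %% N.
Proof.
move=> mu_match mu_rot.
have mu_seat := seat_commute_rot mu_rot.
set c := seat (mu agent0) in mu_seat *.
suff c_n : c = n by move=> a; rewrite mu_seat c_n addnC.
have c_odd : odd c.
  by rewrite odd_seat matching_Men // -in_Women inE /=.
have c_lt : c < N by apply: seat_lt.
have cc_modN : (c + c) %% N = 0.
  have [_ _ muK] := mu_match.
  by rewrite -mu_seat -/c muK /seat /= n_gt0.
case: (ltnP (c + c) N) => [cc_lt | N_le].
- by move: cc_modN; rewrite modn_small; lia.
- by move: cc_modN; rewrite -(subnK N_le) modnDr modn_small; lia.
Qed.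

Lemma key_lt (z a : agent n) : key z a < N.
Proof. exact/ltn_pmod/ltn_addr. Qed.

Lemma card_opp (z : agent n) : #|[set a | opp z a]| = n.
Proof.
case: (boolP (z \in Men n)) => [/opp_Men -> | ]; first exact: card_Women.
by rewrite -in_Women => /opp_Women ->; apply: card_Men.
Qed.

Lemma opp_rot (z a : agent n) : opp (rot z) (rot a) = opp z a.
Proof. by rewrite /opp !in_Men_rot; case: (_ \in _); case: (_ \in _). Qed.

Lemma key_rot (z a : agent n) : key (rot z) (rot a) = key z a.
Proof.
by rewrite /key -modnDml !seat_rot modn_succ_sub ?seat_lt // modnDml.
Qed.

Lemma act_rot_profile : act_profile rot rot_profile = rot_profile.
Proof.
apply/ffunP => z; rewrite !ffunE; apply/setP => -[a b].
rewrite /act_rel !inE /= -[in RHS](permKV rot a) -[in RHS](permKV rot b).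
by rewrite -[in RHS](permKV rot z) !opp_rot !key_rot.
Qed.

Lemma Rank_rot_profile_antipode (z a : agent n) :
  opp z a -> seat a = (seat z + n) %% N -> Rank (rot_profile z) a = n.
Proof.
move=> za a_seat; have key_a : key z a = N.-1.
  have := seat_lt z; rewrite /key a_seat -addnA modnDml => z_lt.
  by rewrite (_ : _ + _ = N.-1 + N) ?modnDr ?modn_small //; lia.
rewrite /Rank -[RHS](card_opp z); apply: eq_card => b; rewrite ffunE !inE /=.
have key_b : key z b <= N.-1 by have := key_lt z b; lia.
by rewrite za key_a key_b /= andbT.
Qed.

End RoundTable.

Lemma resolute_symmetric_commute n (F : mechanism n) (p : profile n) phi :
  Resolute F -> Gsymmetric F -> is_profile p -> Gstar phi ->
  act_profile phi p = p ->
  exists2 mu, F p = [set mu] & forall a, mu (phi a) = phi (mu a).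
Proof.
move=> Fres Fsym p_ok phi_G p_fix.
have [mu Fp] : exists mu, F p = [set mu] by apply/cards1P; rewrite Fres.
exists mu => // a; have := Fsym _ _ p_ok phi_G.
rewrite p_fix Fp /act_matchset imset_set1 => /set1_inj {1}->.
by rewrite /act_match conjgE !permM permK.
Qed.

Theorem theorem4 (n : nat) (hn : 2 <= n) (hodd : odd n) :
  ~ exists F : mechanism n,
      [/\ is_mechanism F, Resolute F, Gsymmetric F & MinOptimal F].
Proof.
case=> F [Fmatch Fres Fsym Fopt].
have n_gt0 : 0 < n by apply: ltnW.
have p_ok := @is_profile_rot_profile n.
have [mu Fmu mu_rot] := resolute_symmetric_commute Fres Fsym p_ok
  (rot_Gstar n_gt0) (act_rot_profile n_gt0).
have mu_in : mu \in F (rot_profile n) by rewrite Fmu set11.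
have mu_match : matching mu := Fmatch _ p_ok _ mu_in.
have [z] := Fopt _ p_ok _ mu_in.
rewrite Rank_rot_profile_antipode ?ltnn ?matching_commute_rot_seat //.
by rewrite /opp matching_Men //; case: (_ \in _).
Qed.
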